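(* Let $k\ge 2$ and let $G$ be a connected graph with vertex set $\{1,\ldots,n\}$, $n\ge 2$, such that for every $i=1,\ldots,n-1$ there are at most two edges $(u,v)$ of $G$ with $u\le i<v$, and such that exactly $k$ vertices of $G$ are separating with respect to this numbering. Then $G$ is a subgraph of some chain of $k-1$ cycles $Z_1,\ldots,Z_{k-1}$ with distinguished vertices $a_j,b_j$ in which $a_1=1$ and $b_{k-1}=n$.
   Context: For a graph with vertex set $\{1,\ldots,n\}$, a vertex $i$ is called separating if there is no edge $(u,v)$ of the graph with $u<i<v$; otherwise it is non-separating. A chain of $m$ cycles is a union of $m$ cycles $Z_1,\ldots,Z_m$ together with vertices $a_j,b_j\in Z_j$ ($j=1,\ldots,m$) such that $Z_i\cap Z_j=\emptyset$ whenever $|i-j|>1$, and $Z_{j-1}\cap Z_j=\{b_{j-1}\}=\{a_j\}$ for every $j=2,\ldots,m$. ''Subgraph'' means that $G$ is contained in the chain as a subgraph, with the vertex $1$ of $G$ equal to $a_1$ and the vertex $n$ of $G$ equal to $b_{k-1}$. *)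

From mathcomp Require Import all_boot.
Set Implicit Arguments. Unset Strict Implicit. Unset Printing Implicit Defensive.

(* A graph G on vertex set {1,..,n} is encoded as a simple graph on 'I_n,
   vertex i (1-based) being the ordinal with value i-1.  The edge relation
   e is assumed symmetric and irreflexive. *)
Definition simple_graph (n : nat) (e : rel 'I_n) : Prop :=
  symmetric e /\ irreflexive e.

Definition connected_graph (n : nat) (e : rel 'I_n) : Prop :=
  forall x y : 'I_n, connect e x y.

Definition cut_size (n : nat) (e : rel 'I_n) (i : nat) : nat :=
  #|[set p : 'I_n * 'I_n | e p.1 p.2 && (p.1 <= i < p.2)]|.

Definition separating (n : nat) (e : rel 'I_n) (i : 'I_n) : bool :=
  ~~ [exists u : 'I_n, exists v : 'I_n, e u v && (u < i < v)].

Definition is_cycle (c : seq nat) : bool := uniq c && (3 <= size c).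

Definition cycle_edge (c : seq nat) (x y : nat) : bool :=
  (x \in c) && (y \in c) && ((next c x == y) || (next c y == x)).

(* Chain of m cycles Z_1..Z_m (0-indexed here: Z 0 .. Z (m-1)) with
   distinguished vertices a_j, b_j in Z_j. *)
Definition chain_of_cycles (m : nat) (Z : nat -> seq nat) (a b : nat -> nat) : Prop :=
  [/\ forall j, j < m -> [/\ is_cycle (Z j), a j \in Z j & b j \in Z j],
      forall i j, i < m -> j < m -> i.+1 < j ->
        forall x, ~~ ((x \in Z i) && (x \in Z j)) &
      forall j, 0 < j < m ->
        (forall x, ((x \in Z j.-1) && (x \in Z j)) = (x == b j.-1)) /\ a j = b j.-1].

Definition chain_edge (m : nat) (Z : nat -> seq nat) (x y : nat) : Prop :=
  exists2 j, j < m & cycle_edge (Z j) x y.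

From mathcomp Require Import all_boot zify.
Set Implicit Arguments. Unset Strict Implicit. Unset Printing Implicit Defensive.

(* No edge jumps over a separating vertex, so the graph splits into segments
   [s, t] between consecutive separating vertices, with no separating vertex
   strictly inside.  Scanning a segment from left to right we keep two heads,
   the last vertices of two tracks, such that every edge crossing the current
   cut starts at a head: since a cut carries at most two edges, a new vertex
   either is adjacent to a head and extends its track, or replaces a head that
   has no neighbour further right.  Every edge of the segment then joins
   consecutive vertices of one track, so the cycle running from s to t along
   the first track and back along the second contains the segment, and the
   cycles of consecutive segments meet exactly in their common separating
   vertex. *)

Lemma next_consecutive (T : eqType) (p q : seq T) x y :
  uniq (p ++ x :: y :: q) -> next (p ++ x :: y :: q) x = y.
Proof.
move=> U; rewrite next_nth mem_cat inE eqxx orbT.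
case: p U => [|h p] U /=; first by rewrite eqxx.
have hx : x \notin h :: p.
  by move: U; rewrite cat_uniq => /and3P [_ /hasPn H _]; apply: H; rewrite inE eqxx.
move: hx; rewrite inE negb_or eq_sym => /andP [/negbTE -> hx].
rewrite index_cat (negbTE hx) /= nth_cat.
by rewrite eqxx addn0 ltnNge leqnSn /= subSn // subnn.
Qed.

Lemma cycle_edgeC c : symmetric (cycle_edge c).
Proof. by move=> x y; rewrite /cycle_edge [(x \in c) && _]andbC orbC. Qed.

Lemma cycle_edge_consecutive p x y q :
  uniq (p ++ x :: y :: q) -> cycle_edge (p ++ x :: y :: q) x y.
Proof.
move=> U; rewrite /cycle_edge next_consecutive // eqxx orTb andbT.
by rewrite !(mem_cat, inE, eqxx, orbT).
Qed.

Lemma cycle_edge_rot i c : uniq c -> cycle_edge (rot i c) =2 cycle_edge c.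
Proof. by move=> U x y; rewrite /cycle_edge !mem_rot !(next_rot i U). Qed.

Lemma cycle_edge_rev c : uniq c -> cycle_edge (rev c) =2 cycle_edge c.
Proof.
move=> U x y; rewrite /cycle_edge !mem_rev !next_rev //.
have prevE z w : (prev c z == w) = (z == next c w).
  by apply/eqP/eqP => [<-|->]; rewrite ?next_prev ?prev_next.
by rewrite !prevE orbC ![_ == next c _]eq_sym.
Qed.

Lemma iota_split a m u : a <= u < a + m ->
  iota a m = iota a (u - a) ++ u :: iota u.+1 (a + m - u.+1).
Proof.
move=> h; have {1}-> : m = (u - a) + (a + m - u.+1).+1 by lia.
by rewrite iotaD /=; have -> : a + (u - a) = u by lia.
Qed.

Lemma filter_iota_consecutive (P : pred nat) a m u w :
  a <= u -> u < w < a + m -> P u -> P w -> (forall y, u < y < w -> ~~ P y) ->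
  exists p q, filter P (iota a m) = p ++ u :: w :: q.
Proof.
move=> au uw Pu Pw notP.
rewrite (@iota_split a m u) ?filter_cat /= ?Pu; last by lia.
rewrite (@iota_split u.+1 (a + m - u.+1) w) ?filter_cat /= ?Pw; last by lia.
rewrite (@eq_in_filter _ P pred0 (iota u.+1 _)) ?filter_pred0; first by do 2 eexists.
by move=> y; rewrite mem_iota => hy; apply/negbTE/notP; lia.
Qed.

Lemma exists_bracket (f : nat -> nat) u m : f 0 <= u < f m ->
  exists2 j, j < m & f j <= u < f j.+1.
Proof.
elim: m => [|m IH] hu; first by lia.
have [lt_u | ge_u] := ltnP u (f m); last by exists m => //; lia.
by have [j hj hju] := IH ltac:(lia); exists j => //; lia.
Qed.

Section CutwidthTwo.

Variables (n : nat) (e : rel 'I_n).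
Hypothesis e_sym : symmetric e.
Hypothesis e_irr : irreflexive e.
Hypothesis cut_le2 : forall i, i.+1 < n -> cut_size e i <= 2.
Hypothesis e_total : forall x : 'I_n, exists y, e x y.

(* Vertices are handled as naturals, so that heads and tracks can be defined
   by recursion on positions. *)
Definition adj (u w : nat) : bool :=
  [exists x : 'I_n, exists y : 'I_n, [&& val x == u, val y == w & e x y]].

Lemma adjP u w : reflect (exists x y : 'I_n, [/\ val x = u, val y = w & e x y]) (adj u w).
Proof.
apply: (iffP existsP) => [[x /existsP [y /and3P [/eqP hx /eqP hy hxy]]]|[x [y [hx hy hxy]]]].
  by exists x, y.
by exists x; apply/existsP; exists y; rewrite hx hy !eqxx.
Qed.

Lemma adj_val (x y : 'I_n) : adj x y = e x y.
Proof.
apply/adjP/idP => [[x' [y' [/val_inj <- /val_inj <- //]]]|h].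
by exists x, y.
Qed.

Lemma adj_lt u w : adj u w -> u < n /\ w < n.
Proof. by case/adjP=> x [y [<- <- _]]; split; apply: ltn_ord. Qed.

Lemma adj_sym : symmetric adj.
Proof.
by move=> u w; apply/adjP/adjP => -[x [y [hx hy hxy]]]; exists y, x; rewrite e_sym.
Qed.

Lemma adjxx u : adj u u = false.
Proof. by apply/adjP => -[x [y [hx /esym hy]]]; rewrite (val_inj (etrans hx hy)) e_irr. Qed.

Lemma adj_exists u : u < n -> exists w, adj u w.
Proof.
by move=> hu; have [y hy] := e_total (Ordinal hu); exists y; rewrite -[u]/(val (Ordinal hu)) adj_val.
Qed.

Definition crossing (i : nat) (p : nat * nat) : bool := adj p.1 p.2 && (p.1 <= i < p.2).

Lemma no_three_crossing i p1 p2 p3 : i.+1 < n ->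
  crossing i p1 -> crossing i p2 -> crossing i p3 -> uniq [:: p1; p2; p3] -> False.
Proof.
move=> hi.
have lift p : crossing i p -> exists2 q : 'I_n * 'I_n,
    (val q.1, val q.2) = p & e q.1 q.2 && (q.1 <= i < q.2).
  case: p => u w; rewrite /crossing /= => /andP [/adjP [x [y [hx hy hxy]]] hc].
  by exists (x, y); rewrite /= hx hy ?hxy.
move=> /lift [q1 <- C1] /lift [q2 <- C2] /lift [q3 <- C3].
rewrite -[[:: _; _; _]]/(map (fun q : 'I_n * 'I_n => (val q.1, val q.2)) [:: q1; q2; q3]).
move=> /(map_uniq) /card_uniqP card3.
have := cut_le2 hi; rewrite /cut_size; apply/negP; rewrite -ltnNge -[3]card3.
by apply: subset_leq_card; apply/subsetP => q; rewrite !inE => /or3P [] /eqP ->.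
Qed.

Definition sep (v : nat) : bool :=
  ~~ [exists u : 'I_n, exists w : 'I_n, e u w && (u < v < w)].

Lemma sep_no_span v u w : sep v -> adj u w -> u < v < w -> False.
Proof.
move=> /negP hs /adjP [x [y [<- <- hxy]]] h; apply: hs.
by apply/existsP; exists x; apply/existsP; exists y; rewrite hxy h.
Qed.

Lemma nsepP v : reflect (exists p q, adj p q && (p < v < q)) (~~ sep v).
Proof.
rewrite negbK; apply: (iffP existsP) => [[x /existsP [y h]]|[p [q /andP [/adjP h hv]]]].
  by exists x, y; rewrite adj_val.
by case: h hv => x [y [<- <- hxy hv]]; exists x; apply/existsP; exists y; rewrite hxy.
Qed.

Lemma nsep_inner v : ~~ sep v -> 0 < v /\ v.+1 < n.
Proof. by case/nsepP=> p [q /andP [/adj_lt [_ hq] hv]]; lia. Qed.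

Lemma left_nbr_unique v u u' : ~~ sep v ->
  adj u v -> adj u' v -> u < v -> u' < v -> u = u'.
Proof.
move=> hs h h' l l'; have [_ hv] := nsep_inner hs.
case/nsepP: hs => p [q /andP [hpq hpv]].
case: (eqVneq u u') => // neq; exfalso.
apply: (@no_three_crossing v.-1 (p, q) (u, v) (u', v)); rewrite /crossing ?h ?h' ?hpq //=; try lia.
by rewrite /= !inE !xpair_eqE; lia.
Qed.

Lemma nbr_beyond_unique v x w w' : ~~ sep v -> x <= v ->
  adj x w -> adj x w' -> v < w -> v < w' -> w = w'.
Proof.
move=> hs hx h h' l l'; have [_ hv] := nsep_inner hs.
case: (eqVneq w w') => // neq; exfalso.
case: (ltnP x v) => hxv; last first.
  case/nsepP: hs => p [q /andP [hpq hpv]].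
  apply: (@no_three_crossing v (p, q) (x, w) (x, w')); rewrite /crossing ?h ?h' ?hpq //=; try lia.
  by rewrite !inE !xpair_eqE; lia.
have [z hz] := adj_exists (ltnW hv).
case: (ltngtP z v) => [z_lt_v | v_lt_z | z_eq_v]; last by rewrite z_eq_v adjxx in hz.
- apply: (@no_three_crossing v.-1 (z, v) (x, w) (x, w')); rewrite /crossing ?h ?h' //=; try lia.
    by rewrite adj_sym hz; lia.
  by rewrite !inE !xpair_eqE; lia.
- have [_ zn] := adj_lt hz.
  apply: (@no_three_crossing v (v, z) (x, w) (x, w')); rewrite /crossing ?h ?h' ?hz //=; try lia.
  by rewrite !inE !xpair_eqE; lia.
Qed.

Definition reaches (x v : nat) : bool := [exists y : 'I_n, (v < y) && adj x y].

Lemma reachesP x v : reflect (exists2 w, v < w & adj x w) (reaches x v).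
Proof.
apply: (iffP existsP) => [[y /andP [hy hxy]]|[w hw hxw]]; first by exists y.
by have [_ wn] := adj_lt hxw; exists (Ordinal wn); rewrite /= hw.
Qed.

Definition advance (h : nat * nat) (v : nat) : nat * nat :=
  let: (x, y) := h in
  if adj x v then (v, y) else if adj y v then (x, v)
  else if reaches x v then (x, v) else (v, y).

Fixpoint heads (v : nat) : nat * nat :=
  if v is v'.+1 then (if sep v then (v, v) else advance (heads v') v) else (0, 0).

Definition heads_inv (v : nat) (h : nat * nat) : Prop :=
  [/\ h.1 <= v, h.2 <= v & forall u w, adj u w -> u <= v < w -> (u == h.1) || (u == h.2)].

Lemma heads_inv_swap v x y : heads_inv v (x, y) -> heads_inv v (y, x).
Proof. by case=> /= hx hy hc; split=> // u w huw hu; rewrite orbC (hc u w). Qed.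

Lemma heads_extend v x y : heads_inv v (x, y) -> (sep v -> x = y) ->
  adj x v.+1 -> heads_inv v.+1 (v.+1, y).
Proof.
case=> /= hx hy hc sepE hxv; split=> [||u w huw hu] /=; try lia.
have [->//|neq] := eqVneq u v.+1.
have /orP [/eqP ux | ->] := hc u w huw ltac:(lia); last by rewrite orbT.
have [xy | nxy] := eqVneq x y; first by rewrite ux xy eqxx orbT.
have nsv : ~~ sep v by apply: contra nxy => /sepE ->.
rewrite ux in huw; have := nbr_beyond_unique nsv hx hxv huw; lia.
Qed.

Lemma heads_fresh v x y : heads_inv v (x, y) -> x = y \/ ~~ reaches x v.+1 ->
  heads_inv v.+1 (v.+1, y).
Proof.
case=> /= hx hy hc hxr; split=> [||u w huw hu] /=; try lia.
have [->//|neq] := eqVneq u v.+1.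
have /orP [/eqP ux | ->] := hc u w huw ltac:(lia); last by rewrite orbT.
case: hxr => [<- | /reachesP []]; first by rewrite ux eqxx orbT.
by exists w; [lia | rewrite -ux].
Qed.

Lemma fresh_right_nbr v x y : heads_inv v (x, y) -> v.+1 < n ->
  ~~ adj x v.+1 -> ~~ adj y v.+1 -> exists2 r, v.+1 < r & adj v.+1 r.
Proof.
case=> /= _ _ hc vn hx hy; have [r hr] := adj_exists vn; exists r => //.
case: (ltngtP r v.+1) => [r_lt | // | r_eq]; last by rewrite r_eq adjxx in hr.
rewrite adj_sym in hr.
by case/orP: (hc r v.+1 hr ltac:(lia)) => /eqP r_eq; [case/negP: hx | case/negP: hy]; rewrite -r_eq.
Qed.

Lemma one_head_reaches v x y : heads_inv v (x, y) -> v.+1 < n ->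
  ~~ adj x v.+1 -> ~~ adj y v.+1 -> reaches x v.+1 -> y = x \/ ~~ reaches y v.+1.
Proof.
move=> inv vn hx hy /reachesP [w hw hxw].
have [r hr hvr] := fresh_right_nbr inv vn hx hy.
have [eq_yx | nyx] := eqVneq y x; [by left | right].
apply/reachesP => -[w' hw' hyw']; case: inv => /= xv yv _.
apply: (@no_three_crossing v.+1 (x, w) (y, w') (v.+1, r)); rewrite /crossing ?hxw ?hyw' ?hvr //=; try lia.
  by have [_ ?] := adj_lt hvr; lia.
by rewrite !inE !xpair_eqE; lia.
Qed.

Lemma heads_sep v : sep v -> heads v = (v, v).
Proof. by case: v => [|v] //= ->. Qed.

Lemma heads_invariant v : heads_inv v (heads v).
Proof.
elim: v => [|v IH]; first by split=> // u w _ hu; rewrite (_ : u = 0) //; lia.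
rewrite /=; case: ifP => [sv | /negbT nsv].
  split=> // u w huw hu; rewrite /= orbb; case: (ltnP u v.+1) => hu'; last by apply/eqP; lia.
  by case: (sep_no_span sv huw); lia.
have [_ vn] := nsep_inner nsv.
have sepE : sep v -> (heads v).1 = (heads v).2 by move/heads_sep ->.
case: (heads v) IH sepE => x y /= IH sepE.
case: ifP => [hx | /negbT hx]; first exact: heads_extend IH sepE hx.
case: ifP => [hy | /negbT hy].
  by apply/heads_inv_swap/(heads_extend (heads_inv_swap IH)) => // /sepE.
case: ifP => [rx | /negbT rx]; last by apply: heads_fresh IH _; right.
apply/heads_inv_swap/(heads_fresh (heads_inv_swap IH)).
exact: one_head_reaches IH (ltnW vn) hx hy rx.
Qed.

Lemma heads_nsep v : ~~ sep v -> heads v = advance (heads v.-1) v.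
Proof. by move=> hs; have [hv _] := nsep_inner hs; case: v hv hs => [|v] //= _ /negbTE ->. Qed.

Definition track_head (c : bool) (v : nat) : nat := if c then (heads v).1 else (heads v).2.

Definition on_track (c : bool) (y : nat) : bool := track_head c y == y.

Lemma track_head_le c v : track_head c v <= v.
Proof. by case: (heads_invariant v) => h1 h2 _; case: c. Qed.

Lemma track_head_nsep c v : ~~ sep v ->
  track_head c v = track_head c v.-1 \/ track_head c v = v.
Proof.
move/heads_nsep; rewrite /track_head => ->; case: (heads v.-1) => x y /=.
by case: c; do 3?case: ifP => _; auto.
Qed.

Lemma on_tracks_disjoint y : ~~ sep y -> ~~ (on_track true y && on_track false y).
Proof.
move=> hs; have [hy _] := nsep_inner hs.
have := track_head_le true y.-1; have := track_head_le false y.-1.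
rewrite /on_track /track_head (heads_nsep hs); case: (heads y.-1) => x1 x2 /=.
by do 3?case: ifP => _ /=; lia.
Qed.

Lemma edge_from_head u w : u < w -> adj u w ->
  exists c, u = track_head c w.-1 /\ (sep w \/ track_head c w = w).
Proof.
move=> uw huw; case: (heads_invariant w.-1) => b1 _ /(_ u w huw) /(_ ltac:(lia)).
case: (boolP (sep w)) => [sw | nsw] hu.
  by case/orP: hu => /eqP hu; [exists true | exists false]; split; auto.
rewrite /track_head (heads_nsep nsw); move: b1 hu; case: (heads w.-1) => x1 x2 /= b1 hu.
case: ifP => [h1 | /negbT h1].
  exists true; split; last by right.
  by case/orP: hu => /eqP // hu; apply: (left_nbr_unique nsw huw h1); lia.
case/orP: hu => /eqP hu; first by rewrite -hu huw in h1.
by exists false; rewrite -hu huw; split; last right.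
Qed.

Section Segment.

Variables s t : nat.
Hypothesis sep_s : sep s.
Hypothesis sep_t : sep t.
Hypothesis s_lt_t : s < t.
Hypothesis inner_nsep : forall y, s < y < t -> ~~ sep y.

Lemma track_head_last c v : s <= v < t ->
  (track_head c v = s \/ on_track c (track_head c v)) /\
  forall y, track_head c v < y <= v -> ~~ on_track c y.
Proof.
have at_s : (track_head c s = s \/ on_track c (track_head c s)) /\
    forall y, track_head c s < y <= s -> ~~ on_track c y.
  have -> : track_head c s = s by rewrite /track_head heads_sep //; case: c.
  by split=> [|y]; [left | lia].
elim: v => [|v IH] hv; first by rewrite (_ : 0 = s) //; lia.
have [<- // | sv] := eqVneq s v.+1.
have nsv : ~~ sep v.+1 by apply: inner_nsep; lia.
have [h_on h_last] := IH ltac:(lia); have hle := track_head_le c v.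
rewrite /on_track; case: (track_head_nsep c nsv) => /= hv1; rewrite hv1 -/(on_track c _).
  split=> // y hy; have [-> | ] := eqVneq y v.+1; last by move=> ?; apply: h_last; lia.
  by rewrite /on_track hv1; apply/eqP; lia.
by split=> [|y]; [right; rewrite /on_track hv1 | lia].
Qed.

Lemma edge_on_track u w : s <= u -> u < w -> w <= t -> adj u w ->
  exists c, [/\ u = s \/ on_track c u, w = t \/ on_track c w
              & forall y, u < y < w -> ~~ on_track c y].
Proof.
move=> su uw wt huw; have [c [hu hw]] := edge_from_head uw huw.
have [hu_s hu_last] := track_head_last c (v := w.-1) ltac:(lia); rewrite -hu in hu_s hu_last.
exists c; split=> // [|y hy]; last by apply: hu_last; lia.
case: hw => [sw | hw]; last by right; rewrite /on_track hw.
by left; apply/eqP; apply: contraTT sw => ?; apply: inner_nsep; lia.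
Qed.

Definition track (c : bool) : seq nat := [seq y <- iota s.+1 (t - s).-1 | on_track c y].

Lemma mem_track c y : (y \in track c) = (s < y < t) && on_track c y.
Proof.
rewrite mem_filter mem_iota andbC; congr (_ && _).
by apply/idP/idP => /andP [h1 h2]; apply/andP; split; lia.
Qed.

Lemma track_path c :
  [seq y <- iota s (t - s).+1 | [|| y == s, y == t | on_track c y]] = s :: track c ++ [:: t].
Proof.
have -> : (t - s).+1 = 1 + (t - s).-1 + 1 by lia.
rewrite !iotaD !filter_cat /= (_ : s + (1 + (t - s).-1) = t); last by lia.
rewrite !eqxx orbT /= addn1; congr (_ :: _ ++ _).
apply: eq_in_filter => y; rewrite mem_iota => hy.
have -> : (y == s) = false by apply/eqP; lia.
by have -> : (y == t) = false by apply/eqP; lia.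
Qed.

(* [d] is a fresh vertex, needed only when the segment is the single edge s-t. *)
Definition seg_cycle (d : nat) : seq nat :=
  s :: track true ++ t ::
    (if (track true == [::]) && (track false == [::]) then [:: d] else rev (track false)).

Lemma mem_seg_cycle d x : x \in seg_cycle d -> s <= x <= t \/ x = d.
Proof.
rewrite inE mem_cat inE => /or4P [/eqP -> | | /eqP -> | ]; try by left; lia.
  by rewrite mem_track => /andP [? _]; left; lia.
case: ifP => _; first by rewrite inE => /eqP; right.
by rewrite mem_rev mem_track => /andP [? _]; left; lia.
Qed.

Lemma uniq_seg_cycle d : t < d -> uniq (seg_cycle d).
Proof.
move=> td; rewrite /seg_cycle; set X := if _ then _ else _.
have inA y : y \in track true -> s < y < t by rewrite mem_track => /andP [].
have inX y : y \in X -> (s < y < t) && (y \notin track true) || (y == d).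
  rewrite /X; case: ifP => _; first by rewrite inE => ->; rewrite orbT.
  rewrite mem_rev mem_track => /andP [hy hf]; rewrite hy /= mem_track hy /=.
  by have := on_tracks_disjoint (inner_nsep hy); rewrite hf andbT => ->.
have uX : uniq X by rewrite /X; case: ifP; rewrite // rev_uniq filter_uniq ?iota_uniq.
rewrite /= mem_cat inE cat_uniq /= uX filter_uniq ?iota_uniq ?andbT //.
apply/and4P; split=> //.
- by apply/or3P => -[/inA | /eqP | /inX /orP [/andP [? _] | /eqP ?]]; lia.
- apply/norP; split; first by apply/negP => /inA; lia.
  by apply/hasPn => y /inX /orP [/andP [_ //] | /eqP ->]; apply/negP => /inA; lia.
- by apply/negP => /inX /orP [/andP [? _] | /eqP ?]; lia.
Qed.

Lemma seg_cycle_size d : 3 <= size (seg_cycle d).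
Proof.
have := size_rev (track false); rewrite /seg_cycle /= size_cat /=.
by case: ifP => [_ | /negbT]; rewrite -?size_eq0 /=; lia.
Qed.

Lemma seg_cycle_edge d u w : t < d -> s <= u -> u < w -> w <= t -> adj u w ->
  cycle_edge (seg_cycle d) u w.
Proof.
move=> td su uw wt huw; have U := uniq_seg_cycle td.
have [c [hu hw hmid]] := edge_on_track su uw wt huw.
have [p [q hpq]] : exists p q, s :: track c ++ [:: t] = p ++ u :: w :: q.
  rewrite -track_path; apply: filter_iota_consecutive; try lia.
  move=> y hy /=; rewrite (negbTE (hmid y hy)) orbF; apply/norP; split; apply/eqP; lia.
rewrite /seg_cycle in U *; set X := (if _ then _ else _) in U *.
have on_true p' q' : s :: track true ++ [:: t] = p' ++ u :: w :: q' ->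
    cycle_edge (s :: track true ++ t :: X) u w.
  have cat_path : s :: track true ++ t :: X = (s :: track true ++ [:: t]) ++ X by rewrite /= -catA.
  move=> eq_path; move: U; rewrite cat_path eq_path -catA /=; exact: cycle_edge_consecutive.
case: c hpq {hu hw hmid} => hpq; first exact: on_true hpq.
case empty : ((track true == [::]) && (track false == [::])).
  by case/andP: empty hpq => /eqP At /eqP -> hpq; apply: (on_true p q); rewrite At.
have rev_rot : rev (rot (size (s :: track true)) (s :: track true ++ t :: X))
    = (rev (track true) ++ p) ++ u :: w :: q.
  by rewrite -catA -hpq -cat_cons rot_size_cat /X empty rev_cat !rev_cons revK -!cats1 -catA.
rewrite -(cycle_edge_rot (size (s :: track true)) U) -cycle_edge_rev ?rot_uniq // rev_rot.
by apply: cycle_edge_consecutive; rewrite -rev_rot rev_uniq rot_uniq.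
Qed.

End Segment.

Hypothesis n_gt1 : 1 < n.

Definition separators : seq nat := [seq v <- iota 0 n | sep v].

Definition separator (j : nat) : nat := nth 0 separators j.

Lemma sep0 : sep 0.
Proof. by apply/negP => /existsP [u /existsP [w /andP [_ /andP [h _]]]]. Qed.

Lemma sep_last : sep n.-1.
Proof.
apply/negP => /existsP [u /existsP [w /andP [_ /andP [_ h]]]].
by have := ltn_ord w; lia.
Qed.

Lemma mem_separators v : (v \in separators) = (v < n) && sep v.
Proof. by rewrite mem_filter mem_iota andbC. Qed.

Lemma size_separators : 1 < size separators.
Proof.
have -> : 2 = size [:: 0; n.-1] by [].
apply: uniq_leq_size => [|v]; first by rewrite /= inE andbT; apply/eqP; lia.
by rewrite !inE mem_separators => /orP [] /eqP ->; rewrite ?sep0 ?sep_last; apply/andP; split => //; lia.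
Qed.

Lemma separator0 : separator 0 = 0.
Proof. by rewrite /separator /separators; case: n n_gt1 => [|m] //= _; rewrite sep0. Qed.

Lemma separator_last : separator (size separators).-1 = n.-1.
Proof.
rewrite /separator nth_last /separators (_ : n = n.-1 + 1); last by lia.
by rewrite iotaD filter_cat /= sep_last last_cat /=; lia.
Qed.

Lemma separator_sep j : j < size separators -> sep (separator j) /\ separator j < n.
Proof. by move=> hj; have := mem_nth 0 hj; rewrite mem_separators => /andP []. Qed.

Lemma separator_lt i j : i < size separators -> j < size separators ->
  (separator i < separator j) = (i < j).
Proof.
have sorted_seps : sorted ltn separators.
  by apply: sorted_filter; [exact: ltn_trans | exact: iota_ltn_sorted].
move=> hi hj; case: (ltngtP i j) => [lt_ij | lt_ji | ->]; last by rewrite ltnn.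
- exact: (sorted_ltn_nth ltn_trans 0 sorted_seps).
- by apply/negbTE; rewrite -leqNgt ltnW // (sorted_ltn_nth ltn_trans 0 sorted_seps).
Qed.

Lemma separator_consecutive j y : j.+1 < size separators ->
  separator j < y < separator j.+1 -> ~~ sep y.
Proof.
move=> hj hy; apply/negP => sy; have [_ hn] := separator_sep hj.
have y_in : y \in separators by rewrite mem_separators sy andbT; lia.
have := nth_index 0 y_in; rewrite -/(separator _) => yE.
have hi : index y separators < size separators by rewrite index_mem.
move: hy; rewrite -yE !separator_lt //; lia.
Qed.

Lemma separator_segment j : j.+1 < size separators ->
  [/\ sep (separator j), sep (separator j.+1), separator j < separator j.+1
    & forall y, separator j < y < separator j.+1 -> ~~ sep y].
Proof.
move=> hj; have [sj _] := separator_sep (ltnW hj); have [sj1 _] := separator_sep hj.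
by split=> // [|y]; [rewrite separator_lt // ltnW | exact: separator_consecutive].
Qed.

Lemma edge_in_segment u w : adj u w -> u < w ->
  exists j, [/\ j.+1 < size separators, separator j <= u & w <= separator j.+1].
Proof.
move=> huw uw; have [_ wn] := adj_lt huw; have k2 := size_separators.
have [j hj hu] : exists2 j, j < (size separators).-1 & separator j <= u < separator j.+1.
  by apply: exists_bracket; rewrite separator0 separator_last; lia.
exists j; split; try lia.
have [sj1 _] := separator_sep (j := j.+1) ltac:(lia).
by case: (leqP w (separator j.+1)) => // w_gt; case: (sep_no_span sj1 huw); lia.
Qed.

Definition chain_cycle (j : nat) : seq nat := seg_cycle (separator j) (separator j.+1) (n + j).

Lemma mem_chain_cycle j x : j.+1 < size separators -> x \in chain_cycle j ->
  separator j <= x <= separator j.+1 \/ x = n + j.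
Proof. by case/separator_segment => hs ht hst hin; apply: mem_seg_cycle. Qed.

Lemma chain_of_separator_cycles :
  chain_of_cycles (size separators).-1 chain_cycle separator (separator \o succn).
Proof.
split=> [j hj | i j hi hj hij x | j hj].
- have [hs ht hst hin] := separator_segment (j := j) ltac:(lia).
  have [_ tn] := separator_sep (j := j.+1) ltac:(lia).
  rewrite /is_cycle uniq_seg_cycle ?seg_cycle_size //=; last by lia.
  by split; rewrite // /chain_cycle /seg_cycle !(inE, mem_cat, eqxx, orbT).
- have [_ tn] := separator_sep (j := j.+1) ltac:(lia).
  have lt_ij : separator i.+1 < separator j by rewrite separator_lt; lia.
  have [_ sn] := separator_sep (j := i.+1) ltac:(lia).
  apply/negP => /andP [/mem_chain_cycle xi /mem_chain_cycle xj].
  by have := xi ltac:(lia); have := xj ltac:(lia); lia.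
- have jE : j.-1.+1 = j by lia.
  rewrite /= jE; split=> // x.
  have [_ tn] := separator_sep (j := j.+1) ltac:(lia).
  have [_ sn] := separator_sep (j := j) ltac:(lia).
  have lt_j : separator j.-1 < separator j by rewrite separator_lt; lia.
  apply/andP/eqP => [[/mem_chain_cycle xi /mem_chain_cycle xj] | ->].
    by rewrite jE in xi; have := xi ltac:(lia); have := xj ltac:(lia); lia.
  by split; rewrite /chain_cycle /seg_cycle ?jE !(inE, mem_cat, eqxx, orbT).
Qed.

Lemma chain_cycle_edge (u v : 'I_n) : e u v -> chain_edge (size separators).-1 chain_cycle u v.
Proof.
wlog uv : u v / u < v.
  move=> hw huv; case: (ltngtP u v) => [lt_uv | lt_vu | /val_inj eq_uv]; first exact: hw.
    by have [j hj hc] := hw v u lt_vu ltac:(by rewrite e_sym); exists j; rewrite // cycle_edgeC.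
  by rewrite eq_uv e_irr in huv.
rewrite -adj_val => huv; have [j [hj su vt]] := edge_in_segment huv uv.
have [hs ht hst hin] := separator_segment hj; have [_ tn] := separator_sep hj.
by exists j; [lia | apply: seg_cycle_edge => //; lia].
Qed.

End CutwidthTwo.

Lemma card_separating n (e : rel 'I_n) : #|[set i : 'I_n | separating e i]| = size (separators e).
Proof.
rewrite cardsE cardE /enum_mem size_filter -enumT /separators size_filter -val_enum_ord count_map.
by apply: eq_count => x.
Qed.

Lemma connected_no_isolated n (e : rel 'I_n) : 1 < n -> connected_graph e ->
  forall x : 'I_n, exists y, e x y.
Proof.
move=> hn hc x.
have [y hy] : exists y : 'I_n, y != x.
  have [x0 | x_pos] := eqVneq (val x) 0.
    by exists (Ordinal hn); apply/eqP => y_x; rewrite -y_x in x0.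
  by exists (Ordinal (ltnW hn)); apply/eqP => y_x; rewrite -y_x in x_pos.
case/connectP: (hc x y) => [[|z p]] /=; first by move=> _ yx; rewrite yx eqxx in hy.
by case/andP => hz _ _; exists z.
Qed.

Theorem mainTheorem4 (k n : nat) (e : rel 'I_n) :
  2 <= k -> 2 <= n ->
  simple_graph e ->
  connected_graph e ->
  (forall i, 1 <= i <= n.-1 -> cut_size e i.-1 <= 2) ->
  #|[set i : 'I_n | separating e i]| = k ->
  exists (Z : nat -> seq nat) (a b : nat -> nat),
    chain_of_cycles k.-1 Z a b /\
    exists f : 'I_n -> nat,
      [/\ injective f,
          forall u v : 'I_n, e u v -> chain_edge k.-1 Z (f u) (f v),
          forall x : 'I_n, val x = 0 -> f x = a 0 &
          forall x : 'I_n, val x = n.-1 -> f x = b (k.-1).-1].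
Proof.
move=> _ hn [e_sym e_irr] e_conn e_cut; rewrite card_separating => <-.
have cut_le2 i : i.+1 < n -> cut_size e i <= 2 by move=> hi; apply: (e_cut i.+1); lia.
have e_total := connected_no_isolated hn e_conn.
exists (chain_cycle e), (separator e), (separator e \o succn); split.
  exact: chain_of_separator_cycles.
exists val; split=> [||x ->|x ->]; first exact: val_inj.
- exact: chain_cycle_edge.
- by rewrite separator0.
- have k2 := size_separators e hn.
  by rewrite /= (_ : _.-2.+1 = (size (separators e)).-1) ?(separator_last e hn) //; lia.
Qed.
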